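(* The proof system $\mathbf{ELCR}^-$ is sound for $\mathsf{ELCR}^-$: every formula of $\mathcal{L}^-$ derivable in $\mathbf{ELCR}^-$ is valid on the class of all $k$-sight models.
   Context: Fix a natural number $k$ and a vocabulary: $Pred$ (predicate symbols with arities, containing binary $R$), a nonempty finite set $Cons$ of constants, $Var=\{x,y\}$; terms $\mathsf{Term}=Cons\cup Var$. $\mathcal{L}_{\mathsf{B}}$: $\alpha::=P(t_1,\dots,t_m)\mid t_1\equiv t_2\mid\neg\alpha\mid(\alpha\land\alpha)$. $\mathcal{L}^-$: $\varphi::=\alpha\mid K_zt\mid\neg\varphi\mid(\varphi\land\varphi)\mid K_z\alpha$ with $\alpha\in\mathcal{L}_{\mathsf{B}}$, $z\in Var$, $t\in\mathsf{Term}$. $\langle K_z\rangle\beta:=\neg K_z\neg\beta$; $K_z\mathcal{T}:=\bigwedge_{t\in\mathcal{T}}K_zt$; $\alpha[t_1/t_2]$ replaces every occurrence of $t_2$ in $\alpha$ by $t_1$; $t\not\equiv c:=\neg t\equiv c$; $\mathsf{D}^0t_1t_2:=t_1\equiv t_2$, $\mathsf{D}^{n+1}t_1t_2:=\mathsf{D}^nt_1t_2\lor\bigvee_{t\in\mathsf{Term}}(\mathsf{D}^nt_1t\land(Rtt_2\lor Rt_2t))$; for $\mathcal{T}\subseteq Cons$, $K_zz'=\mathcal{T}:=\bigwedge_{c\in\mathcal{T}}\langle K_z\rangle z'\equiv c\land\bigwedge_{c\in Cons\setminus\mathcal{T}}K_z\neg z'\equiv c$. Models: $M=(\mathbf{D},\mathbf{I},\Sigma,\sim)$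 with $\mathbf{D}$ nonempty finite; $\mathbf{I}(P)\subseteq\mathbf{D}^m$ for $m$-ary $P$, $\mathbf{R}:=\mathbf{I}(R)$ serial; $\mathbf{I}(c)\in\mathbf{D}$ for $c\in Cons$, every element of $\mathbf{D}$ named by some constant; $\Sigma\subseteq\mathbf{D}^{Var}$ nonempty (situations); $\sim_x,\sim_y$ equivalence relations on $\Sigma$. $\mathbb{D}^0(s)=\{s\}$, $\mathbb{D}^{m+1}(s)=\mathbb{D}^m(s)\cup\{t:\exists u\in\mathbb{D}^m(s),(u,t)\in\mathbf{R}\text{ or }(t,u)\in\mathbf{R}\}$. $M$ is $k$-sight if $\sigma\sim_z\sigma'$ implies $\sigma(z')=\sigma'(z')$ for every $z'\in Var$ with $\sigma(z')\in\mathbb{D}^k(\sigma(z))$. Semantics: $t^{(\mathbf{I},\sigma)}$ is $\mathbf{I}(t)$ or $\sigma(t)$; $P(t_1,\dots,t_m)$ true iff the tuple of values is in $\mathbf{I}(P)$; $t_1\equiv t_2$ iff equal values; Boolean standard; $K_zt$ true at $\sigma$ iff $t$ has the same value at all $\sigma'\in\Sigma$ with $\sigma'\sim_z\sigma$; $K_z\varphi$ true at $\sigma$ iff $\varphi$ true at all $\sigma'\in\Sigma$ with $\sigma'\sim_z\sigma$. Valid = true at every situation of every $k$-sight model. $\mathbf{ELCR}^-$ has axioms and rules (with $z,z'\in Var$, $t,t_i\in\mathsf{Term}$, $c\in Cons$): (Tau) propositional tautologies; (A1) $t_1\equiv t_1$; (A2) $t_1\equiv t_2\to t_2\equiv t_1$;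 (A3) $t_1\equiv t_2\land t_2\equiv t_3\to t_1\equiv t_3$; (A4) $t_1\equiv t_2\to(\alpha\leftrightarrow\alpha[t_1/t_2])$ for $\alpha\in\mathcal{L}_{\mathsf{B}}$; (MP) from $\varphi\to\psi$ and $\varphi$ infer $\psi$; (Seriality) $\bigvee_{t\in Cons}Rct$; (At-Some-Where) $\bigvee_{c\in Cons}z\equiv c$; ($k$-sight) $\mathsf{D}^kzt\to K_zt$; (K) $K_z(\alpha\to\beta)\to(K_z\alpha\to K_z\beta)$, $\alpha,\beta\in\mathcal{L}_{\mathsf{B}}$; (T) $K_z\alpha\to\alpha$, $\alpha\in\mathcal{L}_{\mathsf{B}}$; (Knowledge-Ground) $K_zz'=\mathcal{T}\to(K_z\alpha\leftrightarrow\bigwedge_{c\in\mathcal{T}}\alpha[c/z'])$ for $\mathcal{T}\subseteq Cons$, $\{z,z'\}=\{x,y\}$, $\alpha\in\mathcal{L}_{\mathsf{B}}$; (K-Additivity) from $\varphi\to\alpha$ infer $\varphi\to K_z\alpha$, where $\varphi=K_z\alpha_1\land\dots\land K_z\alpha_n\land\langle K_z\rangle\beta_1\land\dots\land\langle K_z\rangle\beta_m$, $1\le m+n$, $\alpha,\alpha_i,\beta_j\in\mathcal{L}_{\mathsf{B}}$; (K-Elimination) from $\varphi\to(K_z\alpha\to\beta)$ infer $\varphi\to(\alpha\to\beta)$, where $\varphi=K_{z'}\alpha_1\land\dots\land K_{z'}\alpha_n\land\langle K_{z'}\rangle\beta_1\land\dots\land\langle K_{z'}\rangle\beta_m$, $1\le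 m+n$, $\alpha,\beta,\alpha_i,\beta_j\in\mathcal{L}_{\mathsf{B}}$, $\{z,z'\}=\{x,y\}$; (De-Re-Knowledge) $t\equiv c\to(K_zt\leftrightarrow K_zt\equiv c)$; (Structure-Knowledge) $(K_z\mathcal{T}\land\alpha)\to K_z\alpha$ for $\alpha\in\mathcal{L}_{\mathsf{B}}$ all of whose terms lie in $\mathcal{T}\subseteq\mathsf{Term}$. *)

From HB Require Import structures.
From mathcomp Require Import all_boot.
Set Implicit Arguments. Unset Strict Implicit. Unset Printing Implicit Defensive.

Inductive var := vx | vy.
Definition bool_of_var v := if v is vx then true else false.
Definition var_of_bool (b : bool) := if b then vx else vy.
Lemma bool_of_varK : cancel bool_of_var var_of_bool. Proof. by case. Qed.
HB.instance Definition _ := Finite.copy var (can_type bool_of_varK).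

Inductive term (Cons : Type) := TC of Cons | TV of var.
Arguments TV {Cons}.
Definition sum_of_term C (t : term C) : (C + var)%type :=
  match t with TC c => inl c | TV z => inr z end.
Definition term_of_sum C (s : (C + var)%type) : term C :=
  match s with inl c => TC c | inr z => TV z end.
Lemma sum_of_termK C : cancel (@sum_of_term C) (@term_of_sum C). Proof. by case. Qed.
HB.instance Definition _ (C : finType) :=
  Finite.copy (term C) (can_type (@sum_of_termK C)).

Section ELCR.
(* Vocabulary: Cons = finite set of constants; predicate symbols are the
   distinguished binary R together with further symbols OPred with arities. *)
Variables (Cons : finType) (OPred : Type) (oarity : OPred -> nat).
Local Notation term := (term Cons).

Inductive bform :=
| BRel of term & term
| BAtom (P : OPred) of (oarity P).-tuple term
| BEq of term & term
| BNeg of bform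
| BAnd of bform & bform.

Definition bTrue : bform := BEq (TV vx) (TV vx).
Definition bFalse : bform := BNeg bTrue.
Definition bOr a b := BNeg (BAnd (BNeg a) (BNeg b)).
Definition bImp a b := BNeg (BAnd a (BNeg b)).
Definition bIff a b := BAnd (bImp a b) (bImp b a).
Fixpoint bBigAnd (s : seq bform) : bform :=
  match s with [::] => bTrue | a :: s' => if s' is [::] then a else BAnd a (bBigAnd s') end.
Fixpoint bBigOr (s : seq bform) : bform :=
  match s with [::] => bFalse | a :: s' => if s' is [::] then a else bOr a (bBigOr s') end.

Fixpoint bsubst (t1 t2 : term) (a : bform) : bform :=
  let sub s := if s == t2 then t1 else s in
  match a with
  | BRel s1 s2 => BRel (sub s1) (sub s2)
  | BAtom P ts => @BAtom P (map_tuple sub ts)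
  | BEq s1 s2 => BEq (sub s1) (sub s2)
  | BNeg b => BNeg (bsubst t1 t2 b)
  | BAnd b c => BAnd (bsubst t1 t2 b) (bsubst t1 t2 c)
  end.

Fixpoint bterms (a : bform) : seq term :=
  match a with
  | BRel s1 s2 => [:: s1; s2]
  | BAtom P ts => tval ts
  | BEq s1 s2 => [:: s1; s2]
  | BNeg b => bterms b
  | BAnd b c => bterms b ++ bterms c
  end.

Fixpoint Dn (n : nat) (t1 t2 : term) : bform :=
  match n with
  | 0 => BEq t1 t2
  | n'.+1 => bOr (Dn n' t1 t2)
                 (bBigOr [seq BAnd (Dn n' t1 t) (bOr (BRel t t2) (BRel t2 t)) | t <- enum {: term}])
  end.

Inductive form :=
| FB of bform
| FKt of var & term
| FNeg of form
| FAnd of form & form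
| FK of var & bform.

Definition fTrue := FB bTrue.
Definition fImp p q := FNeg (FAnd p (FNeg q)).
Definition fIff p q := FAnd (fImp p q) (fImp q p).
Fixpoint fBigAnd (s : seq form) : form :=
  match s with [::] => fTrue | a :: s' => if s' is [::] then a else FAnd a (fBigAnd s') end.
Definition dia (z : var) (b : bform) := FNeg (FK z (BNeg b)).

Definition Kterms (z : var) (T : {set term}) := fBigAnd [seq FKt z t | t <- enum T].
Definition KeqT (z z' : var) (T : {set Cons}) :=
  fBigAnd ([seq dia z (BEq (TV z') (TC c)) | c <- enum T] ++
           [seq FK z (BNeg (BEq (TV z') (TC c))) | c <- enum (~: T)]).
Definition kphi (z : var) (As Bs : seq bform) :=
  fBigAnd (map (FK z) As ++ map (dia z) Bs).

(* propositional evaluation, atoms being the non-Boolean-compound formulas *)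
Fixpoint bpeval (v : form -> bool) (a : bform) : bool :=
  match a with
  | BNeg b => ~~ bpeval v b
  | BAnd b c => bpeval v b && bpeval v c
  | _ => v (FB a)
  end.
Fixpoint fpeval (v : form -> bool) (p : form) : bool :=
  match p with
  | FB a => bpeval v a
  | FNeg q => ~~ fpeval v q
  | FAnd q r => fpeval v q && fpeval v r
  | _ => v p
  end.
Definition tautology (p : form) := forall v, fpeval v p.

Inductive derivable (k : nat) : form -> Prop :=
| dTau p : tautology p -> derivable k p
| dA1 t : derivable k (FB (BEq t t))
| dA2 t1 t2 : derivable k (FB (bImp (BEq t1 t2) (BEq t2 t1)))
| dA3 t1 t2 t3 :
    derivable k (FB (bImp (BAnd (BEq t1 t2) (BEq t2 t3)) (BEq t1 t3)))
| dA4 t1 t2 a : derivable k (FB (bImp (BEq t1 t2) (bIff a (bsubst t1 t2 a))))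
| dMP p q : derivable k (fImp p q) -> derivable k p -> derivable k q
| dSeriality c : derivable k (FB (bBigOr [seq BRel (TC c) (TC d) | d <- enum {: Cons}]))
| dAtSomeWhere z : derivable k (FB (bBigOr [seq BEq (TV z) (TC c) | c <- enum {: Cons}]))
| dKsight z t : derivable k (fImp (FB (Dn k (TV z) t)) (FKt z t))
| dK z a b : derivable k (fImp (FK z (bImp a b)) (fImp (FK z a) (FK z b)))
| dT z a : derivable k (fImp (FK z a) (FB a))
| dKGround z z' (T : {set Cons}) a : z != z' ->
    derivable k (fImp (KeqT z z' T)
                      (fIff (FK z a) (FB (bBigAnd [seq bsubst (TC c) (TV z') a | c <- enum T]))))
| dKAdditivity z As Bs a : 0 < size As + size Bs ->
    derivable k (fImp (kphi z As Bs) (FB a)) ->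
    derivable k (fImp (kphi z As Bs) (FK z a))
| dKElimination z z' As Bs a b : z != z' -> 0 < size As + size Bs ->
    derivable k (fImp (kphi z' As Bs) (fImp (FK z a) (FB b))) ->
    derivable k (fImp (kphi z' As Bs) (fImp (FB a) (FB b)))
| dDeRe z t c :
    derivable k (fImp (FB (BEq t (TC c))) (fIff (FKt z t) (FK z (BEq t (TC c)))))
| dStructure z (T : {set term}) a : all (mem T) (bterms a) ->
    derivable k (fImp (FAnd (Kterms z T) (FB a)) (FK z a)).

Record model := Model {
  dom : finType;
  dom_nonempty : 0 < #|dom|;
  IR : rel dom;
  IR_serial : forall d, exists d', IR d d';
  IP : forall P : OPred, (oarity P).-tuple dom -> bool;
  IC : Cons -> dom;
  IC_named : forall d, exists c, IC c = d;
  sits : {set {ffun var -> dom}};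
  sits_nonempty : sits != set0;
  sim : var -> {ffun var -> dom} -> {ffun var -> dom} -> Prop;
  sim_refl : forall z s, s \in sits -> sim z s s;
  sim_sym : forall z s s', s \in sits -> s' \in sits -> sim z s s' -> sim z s' s;
  sim_trans : forall z s1 s2 s3, s1 \in sits -> s2 \in sits -> s3 \in sits ->
                sim z s1 s2 -> sim z s2 s3 -> sim z s1 s3
}.

Section Semantics.
Variable M : model.
Local Notation D := (dom M).

Definition tval (s : {ffun var -> D}) (t : term) : D :=
  match t with TC c => @IC M c | TV z => s z end.

Fixpoint Dset (m : nat) (d : D) : pred D :=
  match m with
  | 0 => pred1 d
  | m'.+1 => fun e => Dset m' d e || [exists u, Dset m' d u && (@IR M u e || @IR M e u)]
  end.

Fixpoint bsat (s : {ffun var -> D}) (a : bform) : bool :=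
  match a with
  | BRel t1 t2 => @IR M (tval s t1) (tval s t2)
  | BAtom P ts => @IP M P (map_tuple (tval s) ts)
  | BEq t1 t2 => tval s t1 == tval s t2
  | BNeg b => ~~ bsat s b
  | BAnd b c => bsat s b && bsat s c
  end.

Fixpoint fsat (s : {ffun var -> D}) (p : form) : Prop :=
  match p with
  | FB a => bsat s a
  | FKt z t => forall s', s' \in @sits M -> @sim M z s' s -> tval s' t = tval s t
  | FNeg q => ~ fsat s q
  | FAnd q r => fsat s q /\ fsat s r
  | FK z a => forall s', s' \in @sits M -> @sim M z s' s -> bsat s' a
  end.

Definition ksight (k : nat) : Prop :=
  forall z s s', s \in @sits M -> s' \in @sits M -> @sim M z s s' ->
    forall z', s z' \in Dset k (s z) -> s z' = s' z'.
End Semantics.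

Definition valid (k : nat) (p : form) : Prop :=
  forall M : model, ksight M k -> forall s, s \in @sits M -> fsat s p.
End ELCR.

From Pilot Require Import Defs.
From HB Require Import structures.
From mathcomp Require Import all_boot.
From mathcomp Require Import boolp.
Set Implicit Arguments. Unset Strict Implicit. Unset Printing Implicit Defensive.

(* A
   tautology holds at a situation because the valuation giving each atom its
   truth value there evaluates like [fsat].  Most other axioms are immediate
   from the semantics, and (k-sight) is literally the k-sight condition.
   Since [s z] always lies in [D^k(s z)], k-sight makes every agent know its
   own location; hence a situation that z cannot tell apart from the current
   one differs from it only in the value of z', whose possible values are
   named exactly by the constants of T: this is (Knowledge-Ground).  The
   premises of (K-Additivity) are preserved along [~_z].  For
   (K-Elimination), making z omniscient (replacing [~_z] by equality)
   preserves k-sight and the truth of the premise about z', and turns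
   [K_z alpha] into [alpha]. *)

Lemma var_neq_eq (z z' w : var) : z != z' -> w != z' -> w = z.
Proof. by case: z; case: z'; case: w. Qed.

Section Conjunctions.
Variables (Cons : finType) (OPred : Type) (oarity : OPred -> nat).
Implicit Types (q : form Cons oarity) (l : seq (form Cons oarity)).

Lemma fsat_fBigAnd_cons (M : model Cons oarity) (s : {ffun var -> dom M}) q l :
  fsat s (fBigAnd (q :: l)) <-> fsat s q /\ fsat s (fBigAnd l).
Proof. by case: l => [|r l] //=; rewrite eqxx; split=> [|[]]. Qed.

Lemma fsat_fBigAnd_map_impl (T : Type) (M M' : model Cons oarity)
    (s : {ffun var -> dom M}) (s' : {ffun var -> dom M'})
    (f : T -> form Cons oarity) (l : seq T) :
  (forall x, fsat s (f x) -> fsat s' (f x)) ->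
  fsat s (fBigAnd (map f l)) -> fsat s' (fBigAnd (map f l)).
Proof.
move=> Hf; elim: l => [|x l IH]; first by rewrite /= !eqxx.
by case/fsat_fBigAnd_cons=> /Hf Hx /IH Hl; apply/fsat_fBigAnd_cons.
Qed.

End Conjunctions.

Section Semantics.
Variables (Cons : finType) (OPred : Type) (oarity : OPred -> nat).
Variable M : model Cons oarity.
Implicit Types (s : {ffun var -> dom M}) (a b : bform Cons oarity) (p q : form Cons oarity).
Implicit Types (z : var) (t : term Cons).

Lemma bsat_bBigOr s l : bsat s (bBigOr l) = has (bsat s) l.
Proof.
elim: l => [|a [|b l] IH] /=; first by rewrite eqxx.
  by rewrite orbF.
by rewrite negb_and !negbK -[RHS]/(bsat s a || has (bsat s) (b :: l)) -IH.
Qed.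

Lemma bsat_bBigAnd s l : bsat s (bBigAnd l) = all (bsat s) l.
Proof.
elim: l => [|a [|b l] IH] /=; first by rewrite eqxx.
  by rewrite andbT.
by rewrite -[RHS]/(bsat s a && all (bsat s) (b :: l)) -IH.
Qed.

Lemma fsat_fBigAnd_cat s l1 l2 :
  fsat s (fBigAnd (l1 ++ l2)) <-> fsat s (fBigAnd l1) /\ fsat s (fBigAnd l2).
Proof.
elim: l1 => [|q l1 IH] /=; first by rewrite eqxx; split=> [|[]].
split.
  by case/fsat_fBigAnd_cons=> Hq /IH [H1 H2]; split=> //; apply/fsat_fBigAnd_cons.
by case=> /fsat_fBigAnd_cons [Hq H1] H2; apply/fsat_fBigAnd_cons; split=> //; apply/IH.
Qed.

Lemma fsat_fBigAnd_map (T : eqType) s (f : T -> form Cons oarity) l :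
  fsat s (fBigAnd (map f l)) <-> {in l, forall x, fsat s (f x)}.
Proof.
elim: l => [|x l IH] /=; first by rewrite eqxx.
split=> [/fsat_fBigAnd_cons [Hx /IH Hl] y | Hl].
  by rewrite inE => /predU1P [->|/Hl].
apply/fsat_fBigAnd_cons; split; first by apply: Hl; rewrite mem_head.
by apply/IH => y Hy; apply: Hl; rewrite inE Hy orbT.
Qed.

Lemma fsat_fImp s p q : fsat s (fImp p q) <-> (fsat s p -> fsat s q).
Proof.
split=> [H Hp | H [Hp]]; last by apply; apply: H.
by apply: contrapT => Hq; apply: H.
Qed.

Lemma fsat_fIff s p q : fsat s (fIff p q) <-> (fsat s p <-> fsat s q).
Proof. by split=> [[/fsat_fImp ? /fsat_fImp ?] | [? ?]]; split=> //; apply/fsat_fImp. Qed.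

Lemma fsat_dia s z b :
  fsat s (dia z b) <-> exists2 s', s' \in sits M /\ sim z s' s & bsat s' b.
Proof.
split=> [H | [s' [Hs' Hsim] Hb] H]; last by move: (H s' Hs' Hsim) => /=; rewrite Hb.
apply: contrapT => Hno; apply: H => s' Hs' Hsim; apply/negP => Hb.
by apply: Hno; exists s'.
Qed.

Lemma bpeval_truth s a : bpeval (fun q => `[< fsat s q >]) a = bsat s a.
Proof. by elim: a => [*|*|*|b /= ->|b /= -> c ->] //=; rewrite asboolb. Qed.

Lemma fpeval_truth s p : fpeval (fun q => `[< fsat s q >]) p <-> fsat s p.
Proof.
elim: p => [a|z t|q IH|q IHq r IHr|z a] /=; try by split=> /asboolP.
- by rewrite bpeval_truth.
- by move: IH; case: fpeval => /= IH; split=> // H; [case: H; apply/IH | move/IH].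
- move: IHq IHr; case: fpeval; case: fpeval => /= IHq IHr;
    by split=> [H|[/IHq ? /IHr ?]]; [split; [apply/IHq | apply/IHr] |].
Qed.

Lemma bsat_bsubst s s' t1 t2 a :
  (forall u, Defs.tval s (if u == t2 then t1 else u) = Defs.tval s' u) ->
  bsat s (bsubst t1 t2 a) = bsat s' a.
Proof.
move=> Hsub; elim: a => [u1 u2|P ts|u1 u2|b /= ->|b /= -> c ->] //=; rewrite ?Hsub //.
by f_equal; apply: val_inj; rewrite /= -map_comp; apply: eq_map.
Qed.

Lemma bsat_eq_on_bterms s s' a :
  {in bterms a, Defs.tval s =1 Defs.tval s'} -> bsat s a = bsat s' a.
Proof.
elim: a => [u1 u2|P ts|u1 u2|b IH|b IHb c IHc] /= Hon.
- by rewrite !Hon // !inE eqxx ?orbT.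
- by f_equal; apply: val_inj; apply/eq_in_map.
- by rewrite !Hon // !inE eqxx ?orbT.
- by rewrite IH.
- by rewrite IHb ?IHc // => u Hu; apply: Hon; rewrite mem_cat Hu ?orbT.
Qed.

Lemma bsat_Dn s n t1 t2 :
  bsat s (Dn oarity n t1 t2) = Dset n (Defs.tval s t1) (Defs.tval s t2).
Proof.
elim: n t2 => [|n IH] t2 //=.
rewrite negb_and !negbK IH bsat_bBigOr has_map; congr (_ || _).
apply/hasP/existsP => [[u _] | [d Hd]].
  by rewrite /= IH negb_and !negbK; exists (Defs.tval s u).
have [c Hc] := IC_named d.
by exists (TC c); rewrite ?mem_enum //= IH negb_and !negbK /= Hc.
Qed.

Lemma Dset_refl n (d : dom M) : Dset n d d.
Proof. by elim: n => [|n IH] /=; rewrite ?eqxx ?IH. Qed.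

Lemma fsat_FK_sim s s' z a : s \in sits M -> s' \in sits M -> sim z s' s ->
  fsat s (FK z a) -> fsat s' (FK z a).
Proof. by move=> Hs Hs' Hsim H s'' Hs'' ?; apply: H => //; apply: sim_trans Hsim. Qed.

Lemma fsat_dia_sim s s' z b : s \in sits M -> s' \in sits M -> sim z s' s ->
  fsat s (dia z b) -> fsat s' (dia z b).
Proof.
move=> Hs Hs' Hsim /fsat_dia [s'' [Hs'' ?] Hb]; apply/fsat_dia; exists s'' => //.
by split=> //; apply: sim_trans (sim_sym Hs' Hs Hsim).
Qed.

Lemma fsat_kphi_sim s s' z As Bs : s \in sits M -> s' \in sits M -> sim z s' s ->
  fsat s (kphi z As Bs) -> fsat s' (kphi z As Bs).
Proof.
move=> Hs Hs' Hsim /fsat_fBigAnd_cat [HA HB]; apply/fsat_fBigAnd_cat; split.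
  by apply: fsat_fBigAnd_map_impl HA => a; apply: fsat_FK_sim.
by apply: fsat_fBigAnd_map_impl HB => b; apply: fsat_dia_sim.
Qed.

Lemma fsat_KeqT s z z' (T : {set Cons}) :
  fsat s (KeqT oarity z z' T) ->
  (forall c, c \in T -> exists2 s', s' \in sits M /\ sim z s' s & s' z' = IC M c) /\
  (forall s', s' \in sits M -> sim z s' s -> forall c, IC M c = s' z' -> c \in T).
Proof.
case/fsat_fBigAnd_cat=> /fsat_fBigAnd_map Hin /fsat_fBigAnd_map Hout.
split=> [c Hc | s' Hs' Hsim c Hc].
  have /fsat_dia [s' Hs' /eqP Hz'] := Hin c ltac:(by rewrite mem_enum).
  by exists s'.
apply: contraT => HcT.
have /(_ s' Hs' Hsim) := Hout c ltac:(by rewrite mem_enum inE).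
by rewrite /= Hc eqxx.
Qed.

Section KSight.
Variable k : nat.
Hypothesis HM : ksight M k.

Lemma ksight_sim_self s s' z : s \in sits M -> s' \in sits M -> sim z s' s -> s' z = s z.
Proof.
move=> Hs Hs' Hsim; apply/esym.
by apply: (HM Hs Hs' (sim_sym Hs' Hs Hsim)); apply: Dset_refl.
Qed.

Lemma bsat_bsubst_sim s s' z z' c a :
  s \in sits M -> s' \in sits M -> sim z s' s -> z != z' -> IC M c = s' z' ->
  bsat s (bsubst (TC c) (TV z') a) = bsat s' a.
Proof.
move=> Hs Hs' Hsim Hzz' Hc; apply: bsat_bsubst => -[d|w] //=.
case: eqP => [[->] //|/eqP Hwz'].
rewrite (var_neq_eq Hzz' Hwz'); exact/esym/(ksight_sim_self Hs Hs' Hsim).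
Qed.

End KSight.
End Semantics.

Section Omniscient.
Variables (Cons : finType) (OPred : Type) (oarity : OPred -> nat).
Variables (M : model Cons oarity) (z : var).
Implicit Types (s : {ffun var -> dom M}) (a : bform Cons oarity).

Definition omniscient_sim (w : var) : {ffun var -> dom M} -> {ffun var -> dom M} -> Prop :=
  if w == z then eq else sim w.

Lemma omniscient_sim_refl w s : s \in sits M -> omniscient_sim w s s.
Proof. by rewrite /omniscient_sim; case: eqP => // _; apply: sim_refl. Qed.

Lemma omniscient_sim_sym w s s' : s \in sits M -> s' \in sits M ->
  omniscient_sim w s s' -> omniscient_sim w s' s.
Proof. by rewrite /omniscient_sim; case: eqP => // _; apply: sim_sym. Qed.

Lemma omniscient_sim_trans w s1 s2 s3 : s1 \in sits M -> s2 \in sits M -> s3 \in sits M ->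
  omniscient_sim w s1 s2 -> omniscient_sim w s2 s3 -> omniscient_sim w s1 s3.
Proof. by rewrite /omniscient_sim; case: eqP => [_ _ _ _ -> //|_]; apply: sim_trans. Qed.

Definition omniscient : model Cons oarity :=
  @Model _ _ _ (dom M) (dom_nonempty M) _ (@IR_serial _ _ _ M) (@IP _ _ _ M) _
    (@IC_named _ _ _ M) _ (sits_nonempty M) _
    omniscient_sim_refl omniscient_sim_sym omniscient_sim_trans.

Lemma omniscient_ksight k : ksight M k -> ksight omniscient k.
Proof.
move=> HM w s s' Hs Hs'; rewrite /= /omniscient_sim.
by case: eqP => [_ ->|_]; last exact: HM.
Qed.

Lemma fsat_omniscient_FK s a : s \in sits M -> fsat (M:=omniscient) s (FK z a) <-> bsat s a.
Proof.
rewrite /= /omniscient_sim eqxx => Hs.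
by split=> [|Ha s' _ ->] //; apply.
Qed.

Lemma fsat_kphi_omniscient s z' As Bs : z' != z ->
  fsat (M:=M) s (kphi z' As Bs) -> fsat (M:=omniscient) s (kphi z' As Bs).
Proof.
move=> Hz'; have Esim : omniscient_sim z' = sim z' by rewrite /omniscient_sim (negbTE Hz').
case/fsat_fBigAnd_cat=> HA HB; apply/fsat_fBigAnd_cat.
by split; [move: HA | move: HB]; apply: fsat_fBigAnd_map_impl => x /=; rewrite Esim.
Qed.

End Omniscient.

Section Soundness.
Variables (Cons : finType) (OPred : Type) (oarity : OPred -> nat) (k : nat).
Implicit Types (a b : bform Cons oarity) (p q : form Cons oarity) (z : var) (t : term Cons).

Lemma valid_tautology p : tautology p -> valid k p.
Proof. by move=> Hp M _ s _; apply/fpeval_truth. Qed.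

Lemma valid_MP p q : valid k (fImp p q) -> valid k p -> valid k q.
Proof. by move=> Hpq Hp M HM s Hs; apply/(fsat_fImp _ _ _).1: (Hp M HM s Hs); apply: Hpq. Qed.

Lemma valid_eq_refl t : valid k (FB (BEq oarity t t)).
Proof. by move=> M _ s _ /=. Qed.

Lemma valid_eq_sym t1 t2 : valid k (FB (bImp (BEq oarity t1 t2) (BEq oarity t2 t1))).
Proof. by move=> M _ s _ /=; rewrite eq_sym andbN. Qed.

Lemma valid_eq_trans t1 t2 t3 :
  valid k (FB (bImp (BAnd (BEq oarity t1 t2) (BEq oarity t2 t3)) (BEq oarity t1 t3))).
Proof. by move=> M _ s _ /=; apply/negP => /andP [/andP [/eqP -> /eqP ->]]; rewrite eqxx. Qed.

Lemma valid_eq_subst t1 t2 a : valid k (FB (bImp (BEq oarity t1 t2) (bIff a (bsubst t1 t2 a)))).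
Proof.
move=> M _ s _ /=; apply/negP => /andP [/eqP E].
rewrite (bsat_bsubst (s' := s)) => [|u]; first by case: bsat.
by case: eqP => [->|].
Qed.

Lemma valid_seriality c :
  valid k (FB (bBigOr [seq BRel oarity (TC c) (TC d) | d <- enum {: Cons}])).
Proof.
move=> M _ s _; rewrite /= bsat_bBigOr has_map.
have [d Hd] := IR_serial (IC M c); have [e He] := IC_named d.
by apply/hasP; exists e; rewrite ?mem_enum //= He.
Qed.

Lemma valid_at_some_where z :
  valid k (FB (bBigOr [seq BEq oarity (TV z) (TC c) | c <- enum {: Cons}])).
Proof.
move=> M _ s _; rewrite /= bsat_bBigOr has_map.
have [c Hc] := IC_named (s z).
by apply/hasP; exists c; rewrite ?mem_enum //= Hc.
Qed.

Lemma valid_ksight_axiom z t : valid k (fImp (FB (Dn oarity k (TV z) t)) (FKt oarity z t)).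
Proof.
move=> M HM s Hs; apply/fsat_fImp; rewrite /= bsat_Dn => HD s' Hs' Hsim.
case: t HD => [c|z'] //= HD.
exact/esym/(HM z s s' Hs Hs' (sim_sym Hs' Hs Hsim) z' HD).
Qed.

Lemma valid_K z a b : valid k (fImp (FK z (bImp a b)) (fImp (FK z a) (FK z b))).
Proof.
move=> M _ s _; apply/fsat_fImp => Hab; apply/fsat_fImp => Ha s' Hs' Hsim.
by move: (Hab s' Hs' Hsim) (Ha s' Hs' Hsim) => /=; case: bsat; case: bsat.
Qed.

Lemma valid_T z a : valid k (fImp (FK z a) (FB a)).
Proof. by move=> M _ s Hs; apply/fsat_fImp => Ha; apply: Ha s Hs (sim_refl z Hs). Qed.

Lemma valid_knowledge_ground z z' (T : {set Cons}) a : z != z' ->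
  valid k (fImp (KeqT oarity z z' T)
                (fIff (FK z a) (FB (bBigAnd [seq bsubst (TC c) (TV z') a | c <- enum T])))).
Proof.
move=> Hzz' M HM s Hs; apply/fsat_fImp => /fsat_KeqT [Hin Hout]; apply/fsat_fIff.
rewrite /= bsat_bBigAnd all_map; split=> [Ha | /allP Hall s' Hs' Hsim].
  apply/allP => c; rewrite mem_enum => /Hin [s' [Hs' Hsim] Hz'].
  by rewrite /= (bsat_bsubst_sim HM a Hs Hs' Hsim Hzz' (esym Hz')); apply: Ha.
have [c Hc] := IC_named (s' z').
rewrite -(bsat_bsubst_sim HM a Hs Hs' Hsim Hzz' Hc).
by apply: (Hall c); rewrite mem_enum (Hout s' Hs' Hsim c Hc).
Qed.

Lemma valid_K_additivity z As Bs a :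
  valid k (fImp (kphi z As Bs) (FB a)) -> valid k (fImp (kphi z As Bs) (FK z a)).
Proof.
move=> Hv M HM s Hs; apply/fsat_fImp => Hk s' Hs' Hsim.
exact: (fsat_fImp _ _ _).1 (Hv M HM s' Hs') (fsat_kphi_sim Hs Hs' Hsim Hk).
Qed.

Lemma valid_K_elimination z z' As Bs a b : z != z' ->
  valid k (fImp (kphi z' As Bs) (fImp (FK z a) (FB b))) ->
  valid k (fImp (kphi z' As Bs) (fImp (FB a) (FB b))).
Proof.
move=> Hzz' Hv M HM s Hs; apply/fsat_fImp => Hk; apply/fsat_fImp => Ha.
have /fsat_fImp := Hv _ (omniscient_ksight (z := z) HM) s Hs.
rewrite eq_sym in Hzz'; move=> /(_ (fsat_kphi_omniscient Hzz' Hk)) /fsat_fImp; apply.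
exact/fsat_omniscient_FK.
Qed.

Lemma valid_de_re z t c :
  valid k (fImp (FB (BEq oarity t (TC c))) (fIff (FKt oarity z t) (FK z (BEq oarity t (TC c))))).
Proof.
move=> M _ s _; apply/fsat_fImp => /eqP Hc; apply/fsat_fIff.
by split=> H s' Hs' Hsim /=; [rewrite H // Hc eqxx | have /eqP -> := H s' Hs' Hsim].
Qed.

Lemma valid_structure_knowledge z (T : {set term Cons}) a : all (mem T) (bterms a) ->
  valid k (fImp (FAnd (Kterms oarity z T) (FB a)) (FK z a)).
Proof.
move=> /allP HT M _ s _; apply/fsat_fImp => -[/fsat_fBigAnd_map HK Ha] s' Hs' Hsim.
rewrite (bsat_eq_on_bterms (s' := s)) // => u /HT HuT.
by apply: HK; rewrite ?mem_enum.
Qed.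

End Soundness.

Theorem fact7 (Cons : finType) (OPred : Type) (oarity : OPred -> nat)
  (HCons : 0 < #|Cons|) (k : nat) (p : form Cons oarity) :
  derivable k p -> valid k p.
Proof.
elim=> {p}.
- exact: valid_tautology.
- exact: valid_eq_refl.
- exact: valid_eq_sym.
- exact: valid_eq_trans.
- exact: valid_eq_subst.
- by move=> p q _ Hpq _; apply: valid_MP.
- exact: valid_seriality.
- exact: valid_at_some_where.
- exact: valid_ksight_axiom.
- exact: valid_K.
- exact: valid_T.
- exact: valid_knowledge_ground.
- by move=> z As Bs a _ _; apply: valid_K_additivity.
- by move=> z z' As Bs a b Hzz' _ _; apply: valid_K_elimination.
- exact: valid_de_re.
- exact: valid_structure_knowledge.
Qed.
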